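(* Let $S \geq 1$ and, for $i = 1,\dots,S$, let $\boldsymbol{M}_i \in \mathbb{R}^{m_i \times m_i}$ be symmetric positive definite, let $\boldsymbol{K}_i \in \mathbb{R}^{m_i \times m_i}$ be symmetric positive semidefinite, and let $\boldsymbol{C}_i \in \mathbb{R}^{p \times m_i}$ be signed Boolean matrices such that $[\boldsymbol{C}_1 \ \cdots \ \boldsymbol{C}_S]$ has full row rank $p$. Let $0 < \gamma \leq 1$ and $\Delta t > 0$, and if $\gamma < 1/2$ assume in addition that $\Delta t \, (1-2\gamma)\, \omega_i^{\max} < 2$ for every $i$, where $\omega_i^{\max}$ is the largest eigenvalue of the generalized eigenvalue problem $\boldsymbol{K}_i \boldsymbol{\phi} = \omega \boldsymbol{M}_i \boldsymbol{\phi}$. Suppose that vectors $\boldsymbol{d}_i^{(n)} \in \mathbb{R}^{m_i}$ ($n \geq 0$), $\boldsymbol{v}_i^{(n+\gamma)} \in \mathbb{R}^{m_i}$ ($n\ge0$) and $\boldsymbol{\lambda}^{(n+\gamma)} \in \mathbb{R}^p$ ($n \ge 0$) satisfy, for all $n \geq 0$ and all $i$ (the modified $\boldsymbol{d}$-continuity method with zero external forcing): $\boldsymbol{M}_i \boldsymbol{v}_i^{(n+\gamma)} + \boldsymbol{K}_i\left((1-\gamma)\boldsymbol{d}_i^{(n)} + \gamma \boldsymbol{d}_i^{(n+1)}\right) = \boldsymbol{C}_i^{\mathrm{T}} \boldsymbol{\lambda}^{(n+\gamma)}$, $\boldsymbol{d}_i^{(n+1)} = \boldsymbol{d}_i^{(n)}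 + \Delta t\, \boldsymbol{v}_i^{(n+\gamma)}$, and $\sum_{i=1}^S \boldsymbol{C}_i \boldsymbol{d}_i^{(n+1)} = \boldsymbol{0}$. Define, for $n \geq 0$, $\boldsymbol{v}_i^{(n+1)} := \gamma \boldsymbol{v}_i^{(n+\gamma)} + (1-\gamma)\boldsymbol{v}_i^{(n+1+\gamma)}$ and $\boldsymbol{\lambda}^{(n+1)} := \gamma \boldsymbol{\lambda}^{(n+\gamma)} + (1-\gamma)\boldsymbol{\lambda}^{(n+1+\gamma)}$. Then the sequences $(\boldsymbol{d}_i^{(n)})_n$, $(\boldsymbol{v}_i^{(n+\gamma)})_n$, $(\boldsymbol{\lambda}^{(n+\gamma)})_n$, $(\boldsymbol{v}_i^{(n+1)})_n$ and $(\boldsymbol{\lambda}^{(n+1)})_n$ are all bounded.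
   Context: A signed Boolean matrix is a matrix whose entries are in $\{-1,0,+1\}$ and each of whose rows has at most one nonzero entry. A sequence of vectors is bounded if there is a constant $C$ independent of $n$ with $\|\boldsymbol{x}^{(n)}\| < C$ for all $n$. The condition on $\Delta t$ for $\gamma<1/2$ is that $\Delta t$ be smaller than the critical time step $2/(\omega_i^{\max}(1-2\gamma))$ of each unconstrained subdomain (no restriction when $\omega_i^{\max}=0$ or $\gamma \ge 1/2$). *)

From HB Require Import structures.
From mathcomp Require Import all_boot all_order all_algebra.
From mathcomp Require Import reals.
Set Implicit Arguments. Unset Strict Implicit. Unset Printing Implicit Defensive.
Import Order.TTheory GRing.Theory Num.Theory.
Local Open Scope ring_scope.

Section Defs.
Variable R : realType.

Definition sym_mx (k : nat) (A : 'M[R]_k) : Prop := A^T = A.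

Definition posdef_mx (k : nat) (A : 'M[R]_k) : Prop :=
  sym_mx A /\ forall x : 'cV[R]_k, x != 0 -> 0 < (x^T *m A *m x) 0 0.

Definition possemidef_mx (k : nat) (A : 'M[R]_k) : Prop :=
  sym_mx A /\ forall x : 'cV[R]_k, 0 <= (x^T *m A *m x) 0 0.

Definition signed_boolean_mx (p k : nat) (C : 'M[R]_(p, k)) : Prop :=
  (forall i j, C i j = 0 \/ C i j = 1 \/ C i j = -1) /\
  (forall i j j', C i j != 0 -> C i j' != 0 -> j = j').

Definition gen_eigenvalue (k : nat) (K M : 'M[R]_k) (w : R) : Prop :=
  exists phi : 'cV[R]_k, phi != 0 /\ K *m phi = w *: (M *m phi).

Definition max_gen_eigenvalue (k : nat) (K M : 'M[R]_k) (w : R) : Prop :=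
  gen_eigenvalue K M w /\ forall w', gen_eigenvalue K M w' -> w' <= w.

(* bounded sequence of vectors (sup-norm; all norms on R^k are equivalent) *)
Definition bounded_seq (k : nat) (x : nat -> 'cV[R]_k) : Prop :=
  exists C : R, forall n (j : 'I_k), `|x n j 0| < C.

End Defs.

(** Energy method.  For [n >= 1] both the increment [d(n+1) - d(n)] and the
    weighted midpoint [(1 - gamma) d(n) + gamma d(n+1)] satisfy the homogeneous
    constraint, so testing the equation of motion against them eliminates the
    multiplier.  This shows that
      [E(n) = sum_i d_i(n)^T M_i d_i(n) + c d_i(n)^T K_i d_i(n)],
      [c = max (dt (1/2 - gamma)) 0],
    is nonincreasing from [n = 1] on: for [gamma >= 1/2] the scheme dissipates,
    and for [gamma < 1/2] the stability condition, in the form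
    [dt (1/2 - gamma) K_i <= M_i] obtained by maximising the Rayleigh quotient,
    controls the stiffness term.  Bounded energy bounds [d], hence
    [v = (d(n+1) - d(n)) / dt], hence [C_i^T lambda = M_i v_i + K_i (...)], and
    finally [lambda] because [[C_1 ... C_S]] has full row rank. *)

From HB Require Import structures.
From mathcomp Require Import all_boot all_order all_algebra.
From mathcomp Require Import reals.
From mathcomp Require Import boolp classical_sets functions topology normedtype derive.
From mathcomp Require Import ring lra.
Import Order.TTheory GRing.Theory Num.Theory.
Import numFieldNormedType.Exports.
Set Implicit Arguments. Unset Strict Implicit. Unset Printing Implicit Defensive.
Local Open Scope ring_scope.

Definition mxform (R : realType) k (A : 'M[R]_k) (x y : 'cV[R]_k) : R :=
  (x^T *m A *m y) 0 0.

Section MxForm.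
Variables (R : realType) (k : nat).
Implicit Types (A B : 'M[R]_k) (x y z : 'cV[R]_k).

Lemma mxformDl A x y z : mxform A (x + y) z = mxform A x z + mxform A y z.
Proof. by rewrite /mxform linearD /= !mulmxDl mxE. Qed.

Lemma mxformDr A x y z : mxform A x (y + z) = mxform A x y + mxform A x z.
Proof. by rewrite /mxform mulmxDr mxE. Qed.

Lemma mxformZl A c x y : mxform A (c *: x) y = c * mxform A x y.
Proof. by rewrite /mxform linearZ /= -!scalemxAl mxE. Qed.

Lemma mxformZr A c x y : mxform A x (c *: y) = c * mxform A x y.
Proof. by rewrite /mxform -!scalemxAr mxE. Qed.

Lemma mxformNl A x y : mxform A (- x) y = - mxform A x y.
Proof. by rewrite -scaleN1r mxformZl mulN1r. Qed.

Lemma mxformNr A x y : mxform A x (- y) = - mxform A x y.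
Proof. by rewrite -scaleN1r mxformZr mulN1r. Qed.

Lemma mxform0l A y : mxform A 0 y = 0.
Proof. by rewrite /mxform trmx0 !mul0mx mxE. Qed.

Lemma mxformBm A B x y : mxform (A - B) x y = mxform A x y - mxform B x y.
Proof. by rewrite /mxform mulmxBr mulmxBl !mxE. Qed.

Lemma mxformZm c A x y : mxform (c *: A) x y = c * mxform A x y.
Proof. by rewrite /mxform -scalemxAr -scalemxAl mxE. Qed.

Lemma mxformE A x y : mxform A x y = (x^T *m (A *m y)) 0 0.
Proof. by rewrite /mxform mulmxA. Qed.

Lemma mxform_delta A j y : mxform A (delta_mx j 0) y = (A *m y) j 0.
Proof.
rewrite mxformE mxE (bigD1 j) //= big1 ?addr0; first by rewrite !mxE !eqxx mul1r.
by move=> j' /negbTE j'j; rewrite !mxE j'j mul0r.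
Qed.

Lemma mxform1 x : mxform 1%:M x x = \sum_j x j 0 ^+ 2.
Proof. by rewrite /mxform mulmx1 mxE; apply: eq_bigr => j _; rewrite mxE expr2. Qed.

Lemma mxform_sym A x y : sym_mx A -> mxform A x y = mxform A y x.
Proof.
move=> symA; rewrite /mxform -[in LHS](trmxK (_ *m y)) mxE.
by rewrite !trmx_mul trmxK symA mulmxA.
Qed.

Lemma mxform_expand A x y t : sym_mx A ->
  mxform A (x + t *: y) (x + t *: y) =
  mxform A x x + 2 * t * mxform A x y + t ^+ 2 * mxform A y y.
Proof.
move=> symA; rewrite mxformDl !mxformDr !mxformZl !mxformZr.
by rewrite (mxform_sym x y symA); ring.
Qed.

Lemma mxform_increment A x y (g : R) : sym_mx A ->
  mxform A y y - mxform A x x =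
  2 * mxform A ((1 - g) *: x + g *: y) (y - x) + (1 - 2 * g) * mxform A (y - x) (y - x).
Proof.
move=> symA; rewrite !(mxformDl, mxformNl, mxformZl) !(mxformDr, mxformNr, mxformZr).
by rewrite (mxform_sym x y symA); ring.
Qed.

Lemma posdef_mxform_gt0 A x : posdef_mx A -> x != 0 -> 0 < mxform A x x.
Proof. by case=> _; apply. Qed.

Lemma posdef_mxform_ge0 A x : posdef_mx A -> 0 <= mxform A x x.
Proof.
move=> posA; have [->|x_neq0] := eqVneq x 0; first by rewrite mxform0l.
exact/ltW/posdef_mxform_gt0.
Qed.

End MxForm.

Lemma nonneg_quadratic_coef1_eq0 (R : realFieldType) (b c : R) : 0 <= c ->
  (forall t, 0 <= 2 * b * t + t ^+ 2 * c) -> b = 0.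
Proof.
move=> c_ge0 ge0; have c1_gt0 : 0 < c + 1 by lra.
have := ge0 (- b / (c + 1)).
have -> : 2 * b * (- b / (c + 1)) + (- b / (c + 1)) ^+ 2 * c =
          - (b ^+ 2 * (c + 2)) / (c + 1) ^+ 2 by field; rewrite gt_eqF.
rewrite pmulr_lge0 ?invr_gt0 ?exprn_gt0 // oppr_ge0 pmulr_lle0; last lra.
by move=> b2; apply/eqP; rewrite -sqrf_eq0 eq_le b2 sqr_ge0.
Qed.

Lemma possemidef_mxform_eq0 (R : realType) k (A : 'M[R]_k) x : possemidef_mx A ->
  mxform A x x = 0 -> A *m x = 0.
Proof.
move=> [symA psdA] Axx0; apply/matrixP => j i; rewrite ord1 [RHS]mxE -mxform_delta.
apply: (nonneg_quadratic_coef1_eq0 (psdA (delta_mx j 0))) => t.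
set y := x + t *: delta_mx j 0.
have : 0 <= mxform A y y := psdA y.
by rewrite mxform_expand // Axx0 add0r (mxform_sym _ _ symA) mulrAC.
Qed.

Lemma continuous_sum (R : numFieldType) (T : topologicalType) (I : Type)
    (r : seq I) (F : I -> T -> R) :
  (forall i, continuous (F i)) -> continuous (fun u => \sum_(i <- r) F i u).
Proof.
move=> contF; elim: r => [|i r IHr].
  by rewrite (_ : (fun _ => _) = fun=> 0); [exact: cst_continuous|
    apply: funext => u; rewrite big_nil].
rewrite (_ : (fun _ => _) = F i + fun u => \sum_(j <- r) F j u); last first.
  by apply: funext => u; rewrite big_cons.
by move=> u; apply: continuousD; [exact: contF|exact: IHr].
Qed.

Lemma mxform_continuous (R : realType) k (A : 'M[R]_k) :
  continuous (fun u : 'rV[R]_k => mxform A u^T u^T).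
Proof.
have -> : (fun u : 'rV[R]_k => mxform A u^T u^T) =
    fun u => \sum_j (\sum_i u 0 i * A i j) * u 0 j.
  by apply: funext => u; rewrite /mxform mxE; apply: eq_bigr => j _;
     rewrite !mxE; congr (_ * _); apply: eq_bigr => i _; rewrite !mxE.
apply: continuous_sum => j u; apply: continuousM; last exact: coord_continuous.
apply: continuous_sum => i v; apply: continuousM; first exact: coord_continuous.
exact: cst_continuous.
Qed.

Section Rayleigh.
Variables (R : realType) (k : nat) (K M : 'M[R]_k).
Hypothesis posM : posdef_mx M.
Local Open Scope classical_set_scope.

Lemma rayleigh_quotient_max : (0 < k)%N ->
  exists2 x0, x0 != 0 & forall x,
    mxform K x x <= mxform K x0 x0 / mxform M x0 x0 * mxform M x x.
Proof.
move=> k_gt0; pose sphere := [set u : 'rV[R]_k | `|u| = 1].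
pose rayleigh u := mxform K u^T u^T / mxform M u^T u^T.
have sphere_neq0 u : sphere u -> u != 0.
  rewrite /sphere /= => u1; apply: contra_eqN u1 => /eqP ->.
  by rewrite normr0 eq_sym oner_eq0.
have normalize (u : 'rV[R]_k) : u != 0 -> sphere (`|u|^-1 *: u).
  move=> u_neq0; rewrite /sphere /= normrZ ger0_norm ?invr_ge0 //.
  by rewrite mulVf ?normr_eq0.
have sphere_set0 : sphere !=set0.
  have one_neq0 : (const_mx 1 : 'rV[R]_k) != 0.
    apply/eqP => /matrixP /(_ 0 (Ordinal k_gt0)) /eqP.
    by rewrite !mxE oner_eq0.
  by exists (`|(const_mx 1 : 'rV[R]_k)|^-1 *: const_mx 1); exact: normalize.
have sphere_compact : compact sphere.
  apply: bounded_closed_compact.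
    rewrite /bounded_set /bounded_near; near=> B => u; rewrite /sphere /= => ->.
    by near: B; exact: nbhs_pinfty_ge.
  apply: (@preimage_closed _ _ (@Num.norm _ 'rV[R]_k) [set x : R | x = 1]) => [u _|].
    exact: norm_continuous.
  exact: closed_eq.
have rayleigh_cont : {within sphere, continuous rayleigh}.
  apply: continuous_in_subspaceT => u /set_mem /sphere_neq0; rewrite -trmx_eq0 => u_neq0.
  apply: (continuousM (s := fun u => mxform K u^T u^T)
                      (t := fun u => (mxform M u^T u^T)^-1)).
    exact: mxform_continuous.
  by apply: continuousV; [rewrite gt_eqF ?posdef_mxform_gt0|exact: mxform_continuous].
have [u /set_mem u_sphere u_max] :=
  compact_EVT_max sphere_set0 sphere_compact rayleigh_cont.
exists u^T => [|x]; first by rewrite trmx_eq0 sphere_neq0.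
have [->|x_neq0] := eqVneq x 0; first by rewrite !mxform0l mulr0.
have xT_neq0 : x^T != 0 by rewrite trmx_eq0.
have := u_max _ (mem_set (normalize _ xT_neq0)).
rewrite /rayleigh linearZ /= trmxK !mxformZl !mxformZr !mulrA -!expr2.
rewrite -mulf_div divff ?mul1r ?expf_neq0 ?invr_eq0 ?normr_eq0 //.
by rewrite ler_pdivrMr ?posdef_mxform_gt0.
Unshelve. all: end_near.
Qed.

Hypothesis psdK : possemidef_mx K.

Lemma max_gen_eigenvalue_rayleigh : (0 < k)%N -> exists w,
  max_gen_eigenvalue K M w /\ forall x, mxform K x x <= w * mxform M x x.
Proof.
move=> /rayleigh_quotient_max [x0 x0_neq0 x0_max].
set w := _ / _ in x0_max; exists w; split=> //; split; last first.
  move=> w' [x [x_neq0 eigen_x]].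
  have : mxform K x x = w' * mxform M x x.
    by rewrite mxformE eigen_x -scalemxAr mxE -mxformE.
  by move=> Kxx; have := x0_max x; rewrite Kxx ler_pM2r ?posdef_mxform_gt0.
have [symM _] := posM; have [symK _] := psdK.
have psdQ : possemidef_mx (w *: M - K).
  split=> [|x]; first by rewrite /sym_mx linearB /= linearZ /= symM symK.
  by rewrite -/(mxform _ x x) mxformBm mxformZm subr_ge0.
have Qx0 : mxform (w *: M - K) x0 x0 = 0.
  by rewrite mxformBm mxformZm /w divfK ?subrr // gt_eqF ?posdef_mxform_gt0.
exists x0; split=> //; apply/eqP; rewrite eq_sym -subr_eq0 scalemxAl -mulmxBl.
by rewrite (possemidef_mxform_eq0 psdQ Qx0).
Qed.

End Rayleigh.

Lemma mxform_le_of_max_gen_eigenvalue (R : realType) k (K M : 'M[R]_k) (a : R) :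
  posdef_mx M -> possemidef_mx K -> 0 <= a ->
  (forall w, max_gen_eigenvalue K M w -> a * w <= 1) ->
  forall x, a * mxform K x x <= mxform M x x.
Proof.
move=> posM psdK a_ge0 max_le x; have [k0|k_gt0] := posnP k.
  rewrite (_ : x = 0) ?mxform0l ?mulr0 //.
  by apply/matrixP => i j; have := ltn_ord i; rewrite [X in (_ < X)%N]k0.
have [w [max_w Kle]] := max_gen_eigenvalue_rayleigh posM psdK k_gt0.
apply: (le_trans (ler_wpM2l a_ge0 (Kle x))).
by rewrite mulrA ler_piMl ?max_le ?posdef_mxform_ge0.
Qed.

Section BoundedSeq.
Variable R : realType.
Implicit Types (k l : nat).

Lemma bounded_seqP k (x : nat -> 'cV[R]_k) :
  bounded_seq x <-> exists B : R, forall n j, `|x n j 0| <= B.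
Proof.
split=> [[B xB]|[B xB]]; exists (B + 1) => n j.
  by apply: ltW; apply: lt_le_trans (xB n j) _; rewrite lerDl.
by rewrite (le_lt_trans (xB n j)) ?ltrDl.
Qed.

Lemma bounded_seq_ext k (x y : nat -> 'cV[R]_k) :
  (forall n, x n = y n) -> bounded_seq x -> bounded_seq y.
Proof. by move=> xy [B xB]; exists B => n j; rewrite -xy. Qed.

Lemma bounded_seq_shift k (x : nat -> 'cV[R]_k) :
  bounded_seq x -> bounded_seq (fun n => x n.+1).
Proof. by move=> [B xB]; exists B. Qed.

Lemma bounded_seqD k (x y : nat -> 'cV[R]_k) : bounded_seq x -> bounded_seq y ->
  bounded_seq (fun n => x n + y n).
Proof.
move=> [B xB] [B' yB]; exists (B + B') => n j; rewrite mxE.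
exact: le_lt_trans (ler_normD _ _) (ltrD (xB n j) (yB n j)).
Qed.

Lemma bounded_seq_sum k (I : Type) (r : seq I) (x : I -> nat -> 'cV[R]_k) :
  (forall i, bounded_seq (x i)) -> bounded_seq (fun n => \sum_(i <- r) x i n).
Proof.
move=> xB; elim: r => [|i r IHr].
  by exists 1 => n j; rewrite big_nil mxE normr0.
by apply: bounded_seq_ext (bounded_seqD (xB i) IHr) => n; rewrite big_cons.
Qed.

Lemma bounded_seq_mulmx k l (A : 'M[R]_(l, k)) (x : nat -> 'cV[R]_k) :
  bounded_seq x -> bounded_seq (fun n => A *m x n).
Proof.
move=> [B xB]; apply/bounded_seqP; exists (\sum_i \sum_j `|A i j| * B) => n i.
apply: (@le_trans _ _ (\sum_j `|A i j| * B)); last first.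
  rewrite (bigD1 i) //= lerDl sumr_ge0 // => i' _.
  by apply: sumr_ge0 => j _; apply: mulr_ge0 (ltW (le_lt_trans _ (xB 0 j))).
rewrite mxE (le_trans (ler_norm_sum _ _ _)) // ler_sum // => j _.
by rewrite normrM ler_wpM2l // ltW.
Qed.

Lemma bounded_seqZ k (c : R) (x : nat -> 'cV[R]_k) :
  bounded_seq x -> bounded_seq (fun n => c *: x n).
Proof.
move=> xB; apply: bounded_seq_ext (bounded_seq_mulmx c%:M xB) => n.
by rewrite mul_scalar_mx.
Qed.

Lemma bounded_seqB k (x y : nat -> 'cV[R]_k) : bounded_seq x -> bounded_seq y ->
  bounded_seq (fun n => x n - y n).
Proof.
move=> xB /(bounded_seqZ (-1)) yB.
by apply: bounded_seq_ext (bounded_seqD xB yB) => n; rewrite scaleN1r.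
Qed.

End BoundedSeq.

Lemma posdef_bounded_seq (R : realType) k (M : 'M[R]_k) (x : nat -> 'cV[R]_k)
    (B : R) :
  posdef_mx M -> (forall n, mxform M (x n) (x n) <= B) -> bounded_seq x.
Proof.
move=> posM xB; have [k0|k_gt0] := posnP k.
  by exists 0 => n j; have := ltn_ord j; rewrite [X in (_ < X)%N]k0.
have [x0 x0_neq0 x0_max] := rayleigh_quotient_max 1%:M posM k_gt0.
set c := _ / _ in x0_max; apply/bounded_seqP; exists (1 + c * B) => n j.
have sq_le : x n j 0 ^+ 2 <= c * B.
  have c_ge0 : 0 <= c.
    rewrite divr_ge0 ?mxform1 ?sumr_ge0 // => [i _|]; first exact: sqr_ge0.
    exact: posdef_mxform_ge0.
  apply: le_trans (ler_wpM2l c_ge0 (xB n)); apply: le_trans (x0_max (x n)).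
  by rewrite mxform1 (bigD1 j) //= lerDl sumr_ge0 // => i _; rewrite sqr_ge0.
apply: (@le_trans _ _ (1 + x n j 0 ^+ 2)); last by rewrite lerD2l.
have := normr_ge0 (x n j 0); rewrite -[_ ^+ 2]real_normK ?num_real; nra.
Qed.

Lemma row_free_mxrow_bounded_seq (R : realType) S p (m : 'I_S -> nat)
    (C : forall i, 'M[R]_(p, m i)) (l : nat -> 'cV[R]_p) :
  row_free (\mxrow_i C i) ->
  (forall i, bounded_seq (fun n => (C i)^T *m l n)) -> bounded_seq l.
Proof.
move=> /mulmxVp CY1 CTlB; set Y := pinvmx _ in CY1.
have l_decomp n : l n = \sum_i (submxcol Y i)^T *m ((C i)^T *m l n).
  rewrite [LHS](_ : _ = (\mxrow_i C i *m Y)^T *m l n); last first.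
    by rewrite CY1 trmx1 mul1mx.
  rewrite trmx_mul -{1}[Y]submxcolK tr_mxcol tr_mxrow mul_mxrow_mxcol mulmx_suml.
  by apply: eq_bigr => i _; rewrite mulmxA.
apply: bounded_seq_ext (bounded_seq_sum _ (fun i => bounded_seq_mulmx _ (CTlB i))).
by move=> n; rewrite [RHS]l_decomp.
Qed.

Section ModifiedDContinuity.
Variables (R : realType) (S p : nat) (m : 'I_S -> nat).
Variables (M K : forall i, 'M[R]_(m i)) (C : forall i, 'M[R]_(p, m i)).
Variables (gamma dt : R) (d v : forall i, nat -> 'cV[R]_(m i)) (l : nat -> 'cV[R]_p).
Hypothesis posM : forall i, posdef_mx (M i).
Hypothesis psdK : forall i, possemidef_mx (K i).
Hypothesis dt_gt0 : 0 < dt.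
Hypothesis cfl : gamma < 1 / 2 -> forall i w,
  max_gen_eigenvalue (K i) (M i) w -> dt * (1 - 2 * gamma) * w < 2.
Hypothesis motion : forall i n,
  M i *m v i n + K i *m ((1 - gamma) *: d i n + gamma *: d i n.+1) = (C i)^T *m l n.
Hypothesis update : forall i n, d i n.+1 = d i n + dt *: v i n.
Hypothesis constraint : forall n, \sum_i C i *m d i n.+1 = 0.

Let symM i : sym_mx (M i). Proof. by case: (posM i). Qed.
Let symK i : sym_mx (K i). Proof. by case: (psdK i). Qed.
Let M_ge0 i x : 0 <= mxform (M i) x x. Proof. exact: posdef_mxform_ge0. Qed.
Let K_ge0 i x : 0 <= mxform (K i) x x. Proof. by case: (psdK i) => _; apply. Qed.

Let d_mid i n := (1 - gamma) *: d i n + gamma *: d i n.+1.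
Let d_incr i n := d i n.+1 - d i n.
Let d_incrE i n : d_incr i n = dt *: v i n.
Proof. by rewrite /d_incr update addrAC subrr add0r. Qed.

Lemma weak_form n (z : forall i, 'cV[R]_(m i)) : \sum_i C i *m z i = 0 ->
  \sum_i mxform (M i) (z i) (d_incr i n) = - dt * \sum_i mxform (K i) (z i) (d_mid i n).
Proof.
move=> z_adm; apply/eqP; rewrite mulr_sumr -subr_eq0 -sumrB; apply/eqP.
have tested i : mxform (M i) (z i) (d_incr i n) - - dt * mxform (K i) (z i) (d_mid i n)
    = dt * ((z i)^T *m ((C i)^T *m l n)) 0 0.
  rewrite d_incrE mxformZr mulNr opprK -mulrDr !mxformE.
  by rewrite -motion mulmxDr [in RHS]mxE.
under eq_bigr do rewrite tested.
rewrite -mulr_sumr (_ : \sum_i _ = ((\sum_i C i *m z i)^T *m l n) 0 0).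
  by rewrite z_adm trmx0 mul0mx mxE mulr0.
rewrite raddf_sum mulmx_suml summxE; apply: eq_bigr => i _.
by rewrite mulmxA -trmx_mul.
Qed.

Let c := Num.max (dt * (1 / 2 - gamma)) 0.
Let energy n :=
  \sum_i (mxform (M i) (d i n) (d i n) + c * mxform (K i) (d i n) (d i n)).

Lemma cfl_stiffness_le_mass i x : gamma < 1 / 2 ->
  dt * (1 / 2 - gamma) * mxform (K i) x x <= mxform (M i) x x.
Proof.
move=> small_gamma.
apply: mxform_le_of_max_gen_eigenvalue => // [|w /(cfl small_gamma)]; last lra.
by apply: mulr_ge0; [exact: ltW | lra].
Qed.

Lemma admissible_incr n : \sum_i C i *m d_incr i n.+1 = 0.
Proof.
by rewrite /d_incr; under eq_bigr do rewrite mulmxBr; rewrite sumrB !constraint subrr.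
Qed.

Lemma admissible_mid n : \sum_i C i *m d_mid i n.+1 = 0.
Proof.
rewrite /d_mid; under eq_bigr do rewrite mulmxDr -!scalemxAr.
by rewrite big_split /= -!scaler_sumr !constraint !scaler0 addr0.
Qed.

Lemma energy_increment n : energy n.+1 - energy n =
  \sum_i (2 * mxform (M i) (d_mid i n) (d_incr i n)
           + (1 - 2 * gamma) * mxform (M i) (d_incr i n) (d_incr i n)
           + c * (2 * mxform (K i) (d_incr i n) (d_mid i n)
                  + (1 - 2 * gamma) * mxform (K i) (d_incr i n) (d_incr i n))).
Proof.
rewrite /energy -sumrB; apply: eq_bigr => i _.
rewrite opprD addrACA -mulrBr !(mxform_increment _ _ gamma) //.
by rewrite (mxform_sym _ _ (symK i)).
Qed.

Lemma energy_le n : energy n.+2 <= energy n.+1.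
Proof.
set k := n.+1; pose w i := d_mid i k; pose u i := d_incr i k.
set W := \sum_i mxform (K i) (w i) (w i).
set X := \sum_i mxform (K i) (u i) (w i).
set Mu := \sum_i mxform (M i) (u i) (u i).
set Ku := \sum_i mxform (K i) (u i) (u i).
have wf_mid : \sum_i mxform (M i) (w i) (u i) = - dt * W :=
  weak_form k (admissible_mid n).
have wf_incr : Mu = - dt * X := weak_form k (admissible_incr n).
have energy_incr : energy k.+1 - energy k =
    2 * (- dt * W) + (1 - 2 * gamma) * Mu + c * (2 * X + (1 - 2 * gamma) * Ku).
  by rewrite energy_increment -wf_mid !big_split /= -!mulr_sumr big_split /= -!mulr_sumr.
have W_ge0 : 0 <= W by apply: sumr_ge0.
have Mu_ge0 : 0 <= Mu by apply: sumr_ge0.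
rewrite -subr_le0 energy_incr; have [small_gamma|large_gamma] := ltP gamma (1 / 2).
  set a := 1 / 2 - gamma; have a_ge0 : 0 <= a by rewrite /a; lra.
  rewrite /c max_l; last by apply: mulr_ge0; [exact: ltW|].
  have Ku_le : dt * a * Ku <= Mu.
    by rewrite mulr_sumr; apply: ler_sum => i _; apply: cfl_stiffness_le_mass.
  have X_le : a * Ku <= - X.
    by rewrite -(ler_pM2l dt_gt0); lra.
  (* positivity of the stiffness at [w + a u] absorbs the stiffness increment *)
  have psd_comb : 0 <= W + 2 * a * X + a ^+ 2 * Ku.
    have : 0 <= \sum_i mxform (K i) (w i + a *: u i) (w i + a *: u i).
      by apply: sumr_ge0.
    under eq_bigr do rewrite mxform_expand // (mxform_sym (w _) _ (symK _)).
    by rewrite !big_split /= -!mulr_sumr.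
  have W_ge : a ^+ 2 * Ku <= W.
    have := ler_wpM2l a_ge0 X_le; lra.
  have : 0 <= dt * (W - a ^+ 2 * Ku) by apply: mulr_ge0; [exact: ltW | rewrite subr_ge0].
  rewrite wf_incr /a; lra.
rewrite /c max_r; last first.
  by apply: mulr_ge0_le0; [exact: ltW | lra].
have := mulr_ge0 (ltW dt_gt0) W_ge0.
have : 0 <= (2 * gamma - 1) * Mu by apply: mulr_ge0 => //; lra.
lra.
Qed.

Let c_ge0 : 0 <= c. Proof. by rewrite le_max lexx orbT. Qed.

Lemma energy_le_max n : energy n <= Num.max (energy 0) (energy 1).
Proof.
case: n => [|n]; first by rewrite le_max lexx.
elim: n => [|n IHn]; first by rewrite le_max lexx orbT.
exact: le_trans (energy_le n) IHn.
Qed.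

Lemma displacement_bounded i : bounded_seq (d i).
Proof.
apply: (posdef_bounded_seq (posM i)) => n; apply: le_trans (energy_le_max n).
rewrite /energy (bigD1 i) //= -addrA lerDl addr_ge0 ?mulr_ge0 //.
by apply: sumr_ge0 => j _; rewrite addr_ge0 ?mulr_ge0.
Qed.

Lemma velocity_bounded i : bounded_seq (v i).
Proof.
have dB := displacement_bounded i.
apply: bounded_seq_ext (bounded_seqZ dt^-1 (bounded_seqB (bounded_seq_shift dB) dB)).
by move=> n; rewrite -/(d_incr i n) d_incrE scalerA mulVf ?scale1r ?gt_eqF.
Qed.

Lemma multiplier_bounded : row_free (\mxrow_i C i) -> bounded_seq l.
Proof.
move=> /row_free_mxrow_bounded_seq; apply=> i.
have dB := displacement_bounded i.
apply: (bounded_seq_ext (motion i)); apply: bounded_seqD.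
  exact/bounded_seq_mulmx/velocity_bounded.
apply/bounded_seq_mulmx/bounded_seqD; apply: bounded_seqZ => //.
exact: bounded_seq_shift.
Qed.

End ModifiedDContinuity.

Unset Implicit Arguments.

Theorem mainTheorem3 (R : realType) (S p : nat) (m : 'I_S -> nat)
  (M K : forall i : 'I_S, 'M[R]_(m i))
  (C : forall i : 'I_S, 'M[R]_(p, m i))
  (gamma dt : R)
  (d : forall i : 'I_S, nat -> 'cV[R]_(m i))
  (vg : forall i : 'I_S, nat -> 'cV[R]_(m i))
  (lg : nat -> 'cV[R]_p) :
  (0 < S)%N ->
  (forall i, posdef_mx (M i)) ->
  (forall i, possemidef_mx (K i)) ->
  (forall i, signed_boolean_mx (C i)) ->
  \rank (\mxrow_(i < S) C i) = p ->
  0 < gamma -> gamma <= 1 -> 0 < dt ->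
  (gamma < 1 / 2 -> forall i w, max_gen_eigenvalue (K i) (M i) w ->
      dt * (1 - 2 * gamma) * w < 2) ->
  (forall i n, M i *m vg i n
                 + K i *m ((1 - gamma) *: d i n + gamma *: d i n.+1)
               = (C i)^T *m lg n) ->
  (forall i n, d i n.+1 = d i n + dt *: vg i n) ->
  (forall n, \sum_(i < S) C i *m d i n.+1 = 0) ->
  (forall i, bounded_seq (d i)) /\
  (forall i, bounded_seq (vg i)) /\
  bounded_seq lg /\
  (forall i, bounded_seq (fun n => gamma *: vg i n + (1 - gamma) *: vg i n.+1)) /\
  bounded_seq (fun n => gamma *: lg n + (1 - gamma) *: lg n.+1).
Proof.
move=> _ posM psdK _ full_rank _ _ dt_gt0 cfl motion update constraint.
have vB := velocity_bounded posM psdK dt_gt0 cfl motion update constraint.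
have lB : bounded_seq lg.
  apply: (multiplier_bounded posM psdK dt_gt0 cfl motion update constraint).
  by rewrite /row_free full_rank.
have average_bounded k (x : nat -> 'cV[R]_k) : bounded_seq x ->
    bounded_seq (fun n => gamma *: x n + (1 - gamma) *: x n.+1).
  by move=> xB; apply: bounded_seqD; apply: bounded_seqZ => //; exact: bounded_seq_shift.
split; first exact: (displacement_bounded posM psdK dt_gt0 cfl motion update constraint).
by split=> //; split=> //; split=> [i|]; apply: average_bounded.
Qed.
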